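(* Let $H$ be a Hardy field, $f\in H^\times$, $g\in H$, and consider $A(y)=fy''+f'y'+gy$. Suppose that some (equivalently every) germ $F\in\mathcal C^1$ with $F'=f^{-1}$ satisfies $F>\mathbb R$, and some (equivalently every) germ $G\in\mathcal C^1$ with $G'=g$ satisfies $G>\mathbb R$. Then $A(y)=0$ for some oscillating $y\in\mathcal C^{<\infty}$.
   Context: Germs at $+\infty$; $\mathcal C^n$ germs of $n$-times continuously differentiable real functions on intervals $(a,+\infty)$, $\mathcal C^{<\infty}=\bigcap_n\mathcal C^n$. A Hardy field is a subfield of $\mathcal C^{<\infty}$ closed under derivation. For germs, $F>\mathbb R$ means $F(t)\to+\infty$ as $t\to+\infty$. A germ $y$ oscillates if $y(t)=0$ for arbitrarily large $t$ and $y(t)\neq0$ for arbitrarily large $t$. *)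

From Stdlib Require Import Reals.
From Coquelicot Require Import Coquelicot.
Open Scope R_scope.

Definition eventually_R (P : R -> Prop) : Prop :=
  exists a : R, forall t : R, a < t -> P t.

Definition germ_eq (f g : R -> R) : Prop := eventually_R (fun t => f t = g t).

Definition CnOn (n : nat) (a : R) (f : R -> R) : Prop :=
  forall t : R, a < t ->
    (forall k : nat, (k < n)%nat -> ex_derive (Derive_n f k) t) /\
    continuous (Derive_n f n) t.

Definition germ_Cn (n : nat) (f : R -> R) : Prop := exists a : R, CnOn n a f.

Definition germ_Cinf (f : R -> R) : Prop := forall n : nat, germ_Cn n f.

(* Hardy field: a set of germs (represented as a predicate on representatives,
   saturated under germ equality) which is a subfield of the ring of germs
   C^{<oo} and closed under derivation. *)
Record HardyField (H : (R -> R) -> Prop) : Prop := {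
  hf_saturated : forall f g, H f -> germ_eq f g -> H g;
  hf_Cinf : forall f, H f -> germ_Cinf f;
  hf_zero : H (fun _ => 0);
  hf_one : H (fun _ => 1);
  hf_add : forall f g, H f -> H g -> H (fun t => f t + g t);
  hf_opp : forall f, H f -> H (fun t => - f t);
  hf_mul : forall f g, H f -> H g -> H (fun t => f t * g t);
  hf_inv : forall f, H f -> ~ germ_eq f (fun _ => 0) ->
             exists g, H g /\ germ_eq (fun t => f t * g t) (fun _ => 1);
  hf_der : forall f, H f -> H (Derive f)
}.

Definition tends_to_pinfty (F : R -> R) : Prop :=
  forall M : R, eventually_R (fun t => M < F t).

Definition oscillates (y : R -> R) : Prop :=
  (forall a : R, exists t, a < t /\ y t = 0) /\
  (forall a : R, exists t, a < t /\ y t <> 0).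

From Stdlib Require Import Reals Lra Lia Classical.
From Coquelicot Require Import Coquelicot.
Open Scope R_scope.

(* With [h = 1 / f] in [H], the equation reads [(f y')' + g y = 0], i.e. it is the system
   [y' = h v, v' = - g y].  As [F' = h] tends to [+oo] and [h] has no zeros, [h > 0] on a tail.
   The system has a solution there (Picard iteration, which is a contraction for the sup norm
   weighted by [exp (2 K (t - t0))]), and it is smooth because [h] and [g] are.  Its first
   component has arbitrarily large zeros by Leighton's argument: since [F, G -> +oo], the
   Riccati function [w = v / y] cannot exist on a tail.  It is not eventually zero, since its
   Wronskian with the solution of initial data [(0, 1)] is [1]. *)

Lemma locally_gt (a t : R) : a < t -> locally t (fun x => a < x).
Proof. intro Ht. apply (locally_open (fun x => a < x)); [apply open_gt | now intros | exact Ht]. Qed.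

Lemma continuous_Rmax_l (c x : R) : continuous (fun t => Rmax t c) x.
Proof.
  apply (continuous_ext (fun t => (t + c + Rabs (t - c)) / 2)).
  - intro t. unfold Rmax, Rabs; destruct (Rle_dec t c), (Rcase_abs (t - c)); lra.
  - apply (continuous_scal_l (fun t => t + c + Rabs (t - c)) (/ 2)).
    apply (continuous_plus (fun t => t + c) (fun t => Rabs (t - c))).
    + apply (continuous_plus (fun t => t) (fun _ => c)); [apply continuous_id | apply continuous_const].
    + apply continuous_Rabs_comp, (continuous_minus (fun t => t) (fun _ => c));
        [apply continuous_id | apply continuous_const].
Qed.

Lemma le_of_derive_nonneg (f df : R -> R) (a b : R) : a <= b ->
  (forall x, a <= x <= b -> is_derive f x (df x)) ->
  (forall x, a <= x <= b -> 0 <= df x) -> f a <= f b.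
Proof.
  intros Hab Hd Hpos.
  destruct (MVT_gen f a b df) as [c [Hc Heq]];
    rewrite ?Rmin_left, ?Rmax_right in * by lra.
  - intros x Hx. apply Hd. lra.
  - intros x Hx. apply continuity_pt_filterlim, (ex_derive_continuous (V := R_NormedModule)).
    exists (df x). apply Hd. exact Hx.
  - specialize (Hpos c Hc). nra.
Qed.

Lemma abs_sub_le_of_derive (phi dphi psi dpsi : R -> R) (a b : R) : a <= b ->
  (forall x, a <= x <= b ->
     is_derive phi x (dphi x) /\ is_derive psi x (dpsi x) /\ Rabs (dphi x) <= dpsi x) ->
  Rabs (phi b - phi a) <= psi b - psi a.
Proof.
  intros Hab Hx.
  assert (Hminus : psi a - phi a <= psi b - phi b).
  { apply (le_of_derive_nonneg (fun x => psi x - phi x) (fun x => dpsi x - dphi x)); auto.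
    - intros x Hab'. destruct (Hx x Hab') as (Dphi & Dpsi & _).
      now apply (is_derive_minus psi phi).
    - intros x Hab'. destruct (Hx x Hab') as (_ & _ & Hle).
      pose proof (Rle_abs (dphi x)). lra. }
  assert (Hplus : psi a + phi a <= psi b + phi b).
  { apply (le_of_derive_nonneg (fun x => psi x + phi x) (fun x => dpsi x + dphi x)); auto.
    - intros x Hab'. destruct (Hx x Hab') as (Dphi & Dpsi & _).
      now apply (is_derive_plus psi phi).
    - intros x Hab'. destruct (Hx x Hab') as (_ & _ & Hle).
      pose proof (Rle_abs (- dphi x)). rewrite Rabs_Ropp in *. lra. }
  apply Rabs_le. lra.
Qed.

Lemma pow_half_pos (n : nat) : 0 < (/ 2) ^ n.
Proof. apply pow_lt; lra. Qed.

Lemma geom_half_lt (c eps : R) : 0 < eps -> exists N, c * (/ 2) ^ N < eps.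
Proof.
  intro Heps.
  assert (Hlim : is_lim_seq (fun n => c * (/ 2) ^ n) 0).
  { replace (Finite 0) with (Rbar_mult c 0) by (simpl; f_equal; ring).
    apply is_lim_seq_scal_l, is_lim_seq_geom. rewrite Rabs_pos_eq; lra. }
  apply is_lim_seq_spec in Hlim. destruct (Hlim (mkposreal _ Heps)) as [N HN].
  exists N. specialize (HN N (le_n N)). simpl in HN.
  pose proof (Rle_abs (c * (/ 2) ^ N - 0)). lra.
Qed.

Lemma eq_0_of_abs_le_geom (x c : R) : (forall n, Rabs x <= c * (/ 2) ^ n) -> x = 0.
Proof.
  intro Hx. destruct (Req_dec x 0) as [|Hneq]; auto.
  destruct (geom_half_lt c (Rabs x)) as [N HN]; [now apply Rabs_pos_lt|].
  specialize (Hx N). lra.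
Qed.

Lemma abs_sub_le_of_geom_steps (u : nat -> R) (c : R) :
  (forall n, Rabs (u (S n) - u n) <= c * (/ 2) ^ n) ->
  forall n m, Rabs (u (n + m)%nat - u n) <= 2 * c * ((/ 2) ^ n - (/ 2) ^ (n + m)).
Proof.
  intros Hstep n m. induction m as [|m IH].
  - rewrite Nat.add_0_r, Rminus_diag, Rabs_R0. lra.
  - rewrite Nat.add_succ_r.
    replace (u (S (n + m)) - u n) with ((u (S (n + m)) - u (n + m)%nat) + (u (n + m)%nat - u n))
      by ring.
    eapply Rle_trans; [apply Rabs_triang|].
    pose proof (Hstep (n + m)%nat). simpl pow. lra.
Qed.

Lemma abs_Lim_seq_sub_le_of_geom_steps (u : nat -> R) (c : R) :
  (forall n, Rabs (u (S n) - u n) <= c * (/ 2) ^ n) ->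
  forall n, Rabs (real (Lim_seq u) - u n) <= 2 * c * (/ 2) ^ n.
Proof.
  intros Hstep.
  assert (Hc : 0 <= c).
  { specialize (Hstep O). pose proof (Rabs_pos (u 1%nat - u O)). simpl in Hstep. lra. }
  assert (Hcauchy : forall n m, Rabs (u (n + m)%nat - u n) <= 2 * c * (/ 2) ^ n).
  { intros n m. pose proof (abs_sub_le_of_geom_steps u c Hstep n m).
    pose proof (pow_half_pos (n + m)). nra. }
  destruct (proj2 (ex_lim_seq_cauchy_corr u)) as [l Hl].
  { intro eps. destruct (geom_half_lt (4 * c) eps (cond_pos eps)) as [N HN].
    exists N. intros n m Hn Hm.
    pose proof (Hcauchy N (n - N)%nat) as Hn'. pose proof (Hcauchy N (m - N)%nat) as Hm'.
    rewrite Nat.add_comm, Nat.sub_add in Hn', Hm' by lia.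
    replace (u n - u m) with ((u n - u N) - (u m - u N)) by ring.
    eapply Rle_lt_trans; [apply Rabs_triang|]. rewrite Rabs_Ropp. lra. }
  rewrite (is_lim_seq_unique _ _ Hl). intro n.
  assert (Hlim : is_lim_seq (fun m => Rabs (u (m + n)%nat - u n)) (Rabs (l - u n))).
  { apply (is_lim_seq_abs _ (Finite (l - u n))).
    apply is_lim_seq_minus with l (u n); [now apply (is_lim_seq_incr_n u n l) |
      apply is_lim_seq_const | reflexivity]. }
  apply (is_lim_seq_le _ _ _ _ (fun m => eq_ind _ (fun k => Rabs (u k - u n) <= _)
           (Hcauchy n m) _ (Nat.add_comm n m)) Hlim (is_lim_seq_const _)).
Qed.

Lemma continuous_of_geom_approx (u : nat -> R -> R) (Y : R -> R) (x c : R) :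
  (forall n, continuous (u n) x) ->
  locally x (fun y => forall n, Rabs (Y y - u n y) <= c * (/ 2) ^ n) ->
  continuous Y x.
Proof.
  intros Hu Happrox. apply (proj2 (filterlim_locally Y (Y x))). intro eps.
  assert (Heps3 : 0 < eps / 3) by (pose proof (cond_pos eps); lra).
  destruct (geom_half_lt c (eps / 3) Heps3) as [N HN].
  pose proof (proj1 (filterlim_locally (u N) (u N x)) (Hu N) (mkposreal _ Heps3)) as HuN.
  pose proof (locally_singleton _ _ Happrox N) as Hx.
  generalize (filter_and _ _ Happrox HuN). apply filter_imp. intros y [Hy HyN].
  change (Rabs (Y y - Y x) < eps). change (Rabs (u N y - u N x) < eps / 3) in HyN.
  specialize (Hy N).
  replace (Y y - Y x) with ((Y y - u N y) + (u N y - u N x) - (Y x - u N x)) by ring.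
  eapply Rle_lt_trans; [apply Rabs_triang|]. rewrite Rabs_Ropp.
  eapply Rle_lt_trans; [apply Rplus_le_compat_r, Rabs_triang|]. lra.
Qed.

Definition solves_linear_system (A B y v : R -> R) (t0 : R) : Prop :=
  forall t, t0 < t -> is_derive y t (A t * v t) /\ is_derive v t (B t * y t).

Section LinearSystem.

Variables (A B : R -> R) (al t0 y0 v0 : R).
Hypothesis Hal : al < t0.
Hypothesis HA : forall z, al < z -> continuous A z.
Hypothesis HB : forall z, al < z -> continuous B z.

(* Clamping at [t0] makes the primitive defined and continuous on all of [R]. *)
Definition integral_from (c : R) (u : R -> R) (t : R) : R := c + RInt u t0 (Rmax t t0).

Definition weight (K t : R) : R := exp (2 * K * (Rmax t t0 - t0)).

Lemma is_derive_RInt_from (u : R -> R) (t : R) :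
  (forall z, al < z -> continuous u z) -> al < t -> is_derive (fun s => RInt u t0 s) t (u t).
Proof.
  intros Hu Ht. apply is_derive_RInt with (a := t0); [|now apply Hu].
  apply (filter_imp (fun x => al < x)); [|now apply locally_gt].
  intros b Hb. apply RInt_correct, ex_RInt_continuous.
  intros z Hz. apply Hu. apply Rlt_le_trans with (Rmin t0 b); [apply Rmin_glb_lt|]; lra.
Qed.

Lemma continuous_integral_from (c : R) (u : R -> R) (x : R) :
  (forall z, al < z -> continuous u z) -> continuous (integral_from c u) x.
Proof.
  intro Hu. apply (continuous_plus (fun _ => c) (fun t => RInt u t0 (Rmax t t0))).
  - apply continuous_const.
  - apply (continuous_comp (fun t => Rmax t t0) (fun s => RInt u t0 s)).
    + apply continuous_Rmax_l.
    + apply (ex_derive_continuous (V := R_NormedModule)). eexists.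
      apply is_derive_RInt_from; auto. pose proof (Rmax_r x t0). lra.
Qed.

Lemma is_derive_integral_from (c : R) (u : R -> R) (t : R) :
  (forall z, al < z -> continuous u z) -> t0 < t -> is_derive (integral_from c u) t (u t).
Proof.
  intros Hu Ht.
  apply (is_derive_ext_loc (fun s => c + RInt u t0 s)).
  - apply (filter_imp (fun s => t0 < s)); [|now apply locally_gt].
    intros s Hs. unfold integral_from. now rewrite Rmax_left by lra.
  - replace (u t) with (0 + u t) by ring.
    apply (is_derive_plus (fun _ => c) (fun s => RInt u t0 s)).
    + apply (is_derive_const (V := R_NormedModule)).
    + apply is_derive_RInt_from; auto. lra.
Qed.

Lemma integral_from_t0 (c : R) (u : R -> R) : integral_from c u t0 = c.
Proof. unfold integral_from. rewrite Rmax_left, RInt_point by lra. simpl. unfold zero. simpl. ring. Qed.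

Lemma integral_from_mul_0 (c : R) (M : R -> R) (t : R) :
  integral_from c (fun s => M s * 0) t = c.
Proof.
  unfold integral_from. rewrite (RInt_ext _ (fun _ => 0)), RInt_const; [|intros; simpl; ring].
  simpl. unfold scal; simpl; unfold mult; simpl. ring.
Qed.

Lemma weight_ge_1 (K t : R) : 0 <= K -> 1 <= weight K t.
Proof.
  intro HK. unfold weight. pose proof (exp_ineq1_le (2 * K * (Rmax t t0 - t0))).
  assert (0 <= 2 * K * (Rmax t t0 - t0)) by (pose proof (Rmax_r t t0); nra). lra.
Qed.

Lemma weight_le (K t T : R) : 0 <= K -> t0 <= T -> t <= T -> weight K t <= weight K T.
Proof.
  intros HK HT Ht. unfold weight. rewrite (Rmax_left T) by lra.
  assert (Hle : 2 * K * (Rmax t t0 - t0) <= 2 * K * (T - t0)).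
  { apply Rmult_le_compat_l; [lra|]. apply Rplus_le_compat_r, Rmax_lub; lra. }
  destruct Hle as [Hlt|Heq]; [now left; apply exp_increasing | rewrite Heq; lra].
Qed.

(* If [|u1 - u0| <= D w] with [w = exp (2 K (t - t0))], then integrating against [|M| <= K]
   gives at most [D w / 2]: the weighted norm turns the Picard map into a contraction. *)
Lemma integral_from_contraction (M u1 u0 : R -> R) (c K D T t : R) :
  0 <= K -> 0 <= D -> t0 <= T -> t <= T ->
  (forall z, al < z -> continuous M z) ->
  (forall z, al < z -> continuous u1 z) -> (forall z, al < z -> continuous u0 z) ->
  (forall s, t0 <= s <= T -> Rabs (M s) <= K) ->
  (forall s, s <= T -> Rabs (u1 s - u0 s) <= D * weight K s) ->
  Rabs (integral_from c (fun s => M s * u1 s) t - integral_from c (fun s => M s * u0 s) t)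
    <= D / 2 * weight K t.
Proof.
  intros HK HD HT Ht HM Hu1 Hu0 HMK Hu.
  set (tau := Rmax t t0).
  assert (Htau : t0 <= tau <= T) by (split; [apply Rmax_r | apply Rmax_lub; lra]).
  set (phi := fun x => RInt (fun s => M s * u1 s) t0 x - RInt (fun s => M s * u0 s) t0 x).
  set (psi := fun x => D / 2 * exp (2 * K * (x - t0))).
  assert (Hest : Rabs (phi tau - phi t0) <= psi tau - psi t0).
  { apply (abs_sub_le_of_derive phi (fun x => M x * u1 x - M x * u0 x)
             psi (fun x => K * (D * exp (2 * K * (x - t0))))); [lra|].
    intros x Hx. split; [|split].
    - apply (is_derive_minus (fun x => RInt (fun s => M s * u1 s) t0 x)
               (fun x => RInt (fun s => M s * u0 s) t0 x) x (M x * u1 x) (M x * u0 x));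
        [apply (is_derive_RInt_from (fun s => M s * u1 s)) |
         apply (is_derive_RInt_from (fun s => M s * u0 s))]; try lra;
        intros z Hz; apply (continuous_mult M); auto.
    - unfold psi. auto_derive; [easy|]. unfold Rminus. field.
    - replace (M x * u1 x - M x * u0 x) with (M x * (u1 x - u0 x)) by ring.
      rewrite Rabs_mult. specialize (Hu x ltac:(lra)).
      unfold weight in Hu. rewrite Rmax_left in Hu by lra.
      apply Rmult_le_compat; auto using Rabs_pos. apply HMK. lra. }
  assert (Hphi0 : phi t0 = 0) by (unfold phi; rewrite !RInt_point; simpl; unfold zero; simpl; ring).
  assert (Hpsi0 : 0 <= psi t0) by (unfold psi; pose proof (exp_pos (2 * K * (t0 - t0))); nra).
  unfold integral_from. fold tau.
  replace (c + RInt (fun s => M s * u1 s) t0 tau - (c + RInt (fun s => M s * u0 s) t0 tau))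
    with (phi tau - phi t0) by (rewrite Hphi0; unfold phi; ring).
  unfold weight, psi in *. fold tau. lra.
Qed.

Fixpoint picard (n : nat) : (R -> R) * (R -> R) :=
  match n with
  | O => (fun _ => 0, fun _ => 0)
  | S m => (integral_from y0 (fun s => A s * snd (picard m) s),
            integral_from v0 (fun s => B s * fst (picard m) s))
  end.

Lemma continuous_picard (n : nat) (x : R) :
  continuous (fst (picard n)) x /\ continuous (snd (picard n)) x.
Proof.
  revert x. induction n as [|n IH]; intro x; simpl.
  - split; apply continuous_const.
  - split; apply continuous_integral_from; intros z Hz.
    + apply (continuous_mult A); [now apply HA | exact (proj2 (IH z))].
    + apply (continuous_mult B); [now apply HB | exact (proj1 (IH z))].
Qed.

Lemma bounded_coefficients (T : R) :
  exists K, 0 <= K /\ forall s, t0 <= s <= T -> Rabs (A s) <= K /\ Rabs (B s) <= K.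
Proof.
  destruct (bounded_continuity A t0 T) as [KA HKA]; [intros x Hx; apply HA; lra|].
  destruct (bounded_continuity B t0 T) as [KB HKB]; [intros x Hx; apply HB; lra|].
  exists (Rmax (Rmax KA KB) 0). split; [apply Rmax_r|].
  intros s Hs. specialize (HKA s Hs). specialize (HKB s Hs).
  change (Rabs (A s) < KA) in HKA. change (Rabs (B s) < KB) in HKB.
  pose proof (Rmax_l (Rmax KA KB) 0). pose proof (Rmax_l KA KB). pose proof (Rmax_r KA KB).
  split; lra.
Qed.

Definition sol_y (t : R) : R := real (Lim_seq (fun n => fst (picard n) t)).
Definition sol_v (t : R) : R := real (Lim_seq (fun n => snd (picard n) t)).

Section Bounds.

Variables (K T : R).
Hypothesis HK : 0 <= K.
Hypothesis HT : t0 <= T.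
Hypothesis HAB : forall s, t0 <= s <= T -> Rabs (A s) <= K /\ Rabs (B s) <= K.

Lemma picard_step_le (n : nat) (t : R) : t <= T ->
  Rabs (fst (picard (S n)) t - fst (picard n) t)
    <= (Rabs y0 + Rabs v0) * (/ 2) ^ n * weight K t /\
  Rabs (snd (picard (S n)) t - snd (picard n) t)
    <= (Rabs y0 + Rabs v0) * (/ 2) ^ n * weight K t.
Proof.
  revert t. induction n as [|n IH]; intros t Ht.
  - simpl. rewrite !integral_from_mul_0, !Rminus_0_r.
    pose proof (weight_ge_1 K t HK). pose proof (Rabs_pos y0). pose proof (Rabs_pos v0).
    rewrite Rmult_1_r. split; nra.
  - assert (HD : 0 <= (Rabs y0 + Rabs v0) * (/ 2) ^ n).
    { pose proof (pow_half_pos n). pose proof (Rabs_pos y0). pose proof (Rabs_pos v0). nra. }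
    replace ((Rabs y0 + Rabs v0) * (/ 2) ^ S n) with ((Rabs y0 + Rabs v0) * (/ 2) ^ n / 2)
      by (simpl; field).
    split.
    + apply (integral_from_contraction A _ _ y0 K _ T t HK HD HT Ht HA
               (fun z _ => proj2 (continuous_picard (S n) z))
               (fun z _ => proj2 (continuous_picard n z)) (fun s Hs => proj1 (HAB s Hs))).
      intros s Hs. exact (proj2 (IH s Hs)).
    + apply (integral_from_contraction B _ _ v0 K _ T t HK HD HT Ht HB
               (fun z _ => proj1 (continuous_picard (S n) z))
               (fun z _ => proj1 (continuous_picard n z)) (fun s Hs => proj2 (HAB s Hs))).
      intros s Hs. exact (proj1 (IH s Hs)).
Qed.

Lemma picard_lim_le : exists C, forall n t, t <= T ->
  Rabs (sol_y t - fst (picard n) t) <= C * (/ 2) ^ n /\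
  Rabs (sol_v t - snd (picard n) t) <= C * (/ 2) ^ n.
Proof.
  exists (2 * ((Rabs y0 + Rabs v0) * weight K T)). intros n t Ht.
  assert (Hstep : forall k, Rabs (fst (picard (S k)) t - fst (picard k) t)
                              <= (Rabs y0 + Rabs v0) * weight K T * (/ 2) ^ k /\
                            Rabs (snd (picard (S k)) t - snd (picard k) t)
                              <= (Rabs y0 + Rabs v0) * weight K T * (/ 2) ^ k).
  { intro k. destruct (picard_step_le k t Ht) as [Hy Hv].
    assert (Hw : (Rabs y0 + Rabs v0) * (/ 2) ^ k * weight K t
                   <= (Rabs y0 + Rabs v0) * weight K T * (/ 2) ^ k).
    { replace ((Rabs y0 + Rabs v0) * weight K T * (/ 2) ^ k)
        with ((Rabs y0 + Rabs v0) * (/ 2) ^ k * weight K T) by ring.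
      apply Rmult_le_compat_l; [|now apply weight_le].
      pose proof (pow_half_pos k). pose proof (Rabs_pos y0). pose proof (Rabs_pos v0). nra. }
    split; lra. }
  split; [apply (abs_Lim_seq_sub_le_of_geom_steps (fun k => fst (picard k) t)) |
          apply (abs_Lim_seq_sub_le_of_geom_steps (fun k => snd (picard k) t))];
    intro k; apply Hstep.
Qed.

End Bounds.

Lemma continuous_sol (x : R) : continuous sol_y x /\ continuous sol_v x.
Proof.
  set (T := Rmax (x + 1) t0).
  destruct (bounded_coefficients T) as [K [HK HAB]].
  destruct (picard_lim_le K T HK (Rmax_r _ _) HAB) as [C HC].
  assert (Hloc : locally x (fun y => y <= T)).
  { apply (filter_imp (fun y => y < T)); [intros; lra|].
    apply (locally_open (fun y => y < T)); [apply open_lt | now intros |].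
    pose proof (Rmax_l (x + 1) t0). unfold T. lra. }
  split.
  - apply (continuous_of_geom_approx (fun n => fst (picard n)) _ x C
             (fun n => proj1 (continuous_picard n x))).
    apply (filter_imp _ _ (fun y Hy n => proj1 (HC n y Hy)) Hloc).
  - apply (continuous_of_geom_approx (fun n => snd (picard n)) _ x C
             (fun n => proj2 (continuous_picard n x))).
    apply (filter_imp _ _ (fun y Hy n => proj2 (HC n y Hy)) Hloc).
Qed.

Lemma eq_integral_from_of_approx (M Y u : R -> R) (un : nat -> R -> R) (c K T C t : R) :
  0 <= K -> t0 <= T -> t <= T ->
  (forall z, al < z -> continuous M z) -> (forall s, t0 <= s <= T -> Rabs (M s) <= K) ->
  (forall n z, continuous (un n) z) -> (forall z, continuous u z) ->
  (forall n s, s <= T -> Rabs (u s - un n s) <= C * (/ 2) ^ n) ->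
  (forall n, Rabs (Y t - integral_from c (fun s => M s * un n s) t) <= C * (/ 2) ^ S n) ->
  Y t = integral_from c (fun s => M s * u s) t.
Proof.
  intros HK HT Ht HM HMK Hun Hu Happrox HY.
  apply Rminus_diag_uniq, (eq_0_of_abs_le_geom _ (C + C * weight K t / 2)). intro n.
  assert (HC : 0 <= C * (/ 2) ^ n).
  { specialize (Happrox n T (Rle_refl T)). pose proof (Rabs_pos (u T - un n T)). lra. }
  assert (Hcontr : Rabs (integral_from c (fun s => M s * un n s) t
                         - integral_from c (fun s => M s * u s) t)
                   <= C * (/ 2) ^ n / 2 * weight K t).
  { apply (integral_from_contraction M (un n) u c K _ T t HK HC HT Ht HM
             (fun z _ => Hun n z) (fun z _ => Hu z) HMK).
    intros s Hs. rewrite <- Rabs_Ropp, Ropp_minus_distr.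
    eapply Rle_trans; [now apply Happrox|].
    pose proof (weight_ge_1 K s HK). nra. }
  specialize (HY n). simpl pow in HY.
  replace (Y t - integral_from c (fun s => M s * u s) t)
    with ((Y t - integral_from c (fun s => M s * un n s) t) +
          (integral_from c (fun s => M s * un n s) t - integral_from c (fun s => M s * u s) t))
    by ring.
  eapply Rle_trans; [apply Rabs_triang|].
  pose proof (pow_half_pos n). nra.
Qed.

Lemma sol_integral_eq (t : R) :
  sol_y t = integral_from y0 (fun s => A s * sol_v s) t /\
  sol_v t = integral_from v0 (fun s => B s * sol_y s) t.
Proof.
  set (T := Rmax t t0).
  destruct (bounded_coefficients T) as [K [HK HAB]].
  destruct (picard_lim_le K T HK (Rmax_r _ _) HAB) as [C HC].
  assert (Ht : t <= T) by apply Rmax_l.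
  assert (Hcont : forall n z, continuous (fst (picard n)) z /\ continuous (snd (picard n)) z)
    by apply continuous_picard.
  split.
  - apply (eq_integral_from_of_approx A _ _ (fun n => snd (picard n)) y0 K T C); auto.
    + apply Rmax_r.
    + intros s Hs. now apply HAB.
    + intros n z. exact (proj2 (Hcont n z)).
    + intro z. exact (proj2 (continuous_sol z)).
    + intros n s Hs. apply (HC n s Hs).
    + intro n. apply (HC (S n) t Ht).
  - apply (eq_integral_from_of_approx B _ _ (fun n => fst (picard n)) v0 K T C); auto.
    + apply Rmax_r.
    + intros s Hs. now apply HAB.
    + intros n z. exact (proj1 (Hcont n z)).
    + intro z. exact (proj1 (continuous_sol z)).
    + intros n s Hs. apply (HC n s Hs).
    + intro n. apply (HC (S n) t Ht).
Qed.

Lemma linear_system_solution : exists y v : R -> R,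
  (forall x, continuous y x /\ continuous v x) /\ y t0 = y0 /\ v t0 = v0 /\
  solves_linear_system A B y v t0.
Proof.
  exists sol_y, sol_v. split; [exact continuous_sol|].
  assert (Hcont : forall z, continuous sol_y z /\ continuous sol_v z) by exact continuous_sol.
  split; [|split].
  - now rewrite (proj1 (sol_integral_eq t0)), integral_from_t0.
  - now rewrite (proj2 (sol_integral_eq t0)), integral_from_t0.
  - intros t Ht. split.
    + apply (is_derive_ext (integral_from y0 (fun s => A s * sol_v s))).
      * intro s. symmetry. apply sol_integral_eq.
      * apply (is_derive_integral_from y0 (fun s => A s * sol_v s)); auto.
        intros z Hz. apply (continuous_mult A); [now apply HA | exact (proj2 (Hcont z))].
    + apply (is_derive_ext (integral_from v0 (fun s => B s * sol_y s))).
      * intro s. symmetry. apply sol_integral_eq.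
      * apply (is_derive_integral_from v0 (fun s => B s * sol_y s)); auto.
        intros z Hz. apply (continuous_mult B); [now apply HB | exact (proj1 (Hcont z))].
Qed.

End LinearSystem.

Lemma Derive_n_S (f : R -> R) (k : nat) : Derive_n f (S k) = Derive_n (Derive f) k.
Proof.
  induction k as [|k IH]; [reflexivity|].
  change (Derive (Derive_n f (S k)) = Derive (Derive_n (Derive f) k)). now rewrite IH.
Qed.

Lemma CnOn_0 (a : R) (f : R -> R) : CnOn 0 a f <-> forall t, a < t -> continuous f t.
Proof.
  split; intros Hf t Ht; [apply (Hf t Ht)|].
  split; [intros k Hk; lia | now apply Hf].
Qed.

Lemma CnOn_S (n : nat) (a : R) (f : R -> R) :
  CnOn (S n) a f <-> (forall t, a < t -> ex_derive f t) /\ CnOn n a (Derive f).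
Proof.
  split.
  - intro Hf. split; [intros t Ht; apply (proj1 (Hf t Ht) 0%nat); lia|].
    intros t Ht. destruct (Hf t Ht) as [Hder Hcont]. rewrite <- Derive_n_S.
    split; [intros k Hk; rewrite <- Derive_n_S; apply Hder; lia | exact Hcont].
  - intros [Hder Hf] t Ht. destruct (Hf t Ht) as [Hder' Hcont]. rewrite Derive_n_S.
    split; [|exact Hcont].
    intros [|k] Hk; [now apply Hder | rewrite Derive_n_S; apply Hder'; lia].
Qed.

Lemma CnOn_pred (n : nat) (a : R) (f : R -> R) : CnOn (S n) a f -> CnOn n a f.
Proof.
  intros Hf t Ht. destruct (Hf t Ht) as [Hder _].
  split; [intros k Hk; apply Hder; lia|].
  apply (ex_derive_continuous (V := R_NormedModule)). apply Hder. lia.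
Qed.

Lemma CnOn_tail (n : nat) (a b : R) (f : R -> R) : a <= b -> CnOn n a f -> CnOn n b f.
Proof. intros Hab Hf t Ht. apply Hf. lra. Qed.

Lemma CnOn_ext (n : nat) (a : R) (f g : R -> R) :
  (forall t, a < t -> f t = g t) -> CnOn n a f -> CnOn n a g.
Proof.
  revert f g. induction n as [|n IH]; intros f g Hfg Hf.
  - apply CnOn_0. intros t Ht. apply (continuous_ext_loc g f).
    + apply (filter_imp (fun x => a < x)); [intros; now apply Hfg | now apply locally_gt].
    + now apply (proj1 (CnOn_0 a f) Hf).
  - apply CnOn_S in Hf. destruct Hf as [Hder Hf]. apply CnOn_S. split.
    + intros t Ht. apply (ex_derive_ext_loc f g); [|now apply Hder].
      apply (filter_imp (fun x => a < x)); [intros; now apply Hfg | now apply locally_gt].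
    + apply (IH (Derive f)); [|exact Hf]. intros t Ht. apply Derive_ext_loc.
      apply (filter_imp (fun x => a < x)); [intros; now apply Hfg | now apply locally_gt].
Qed.

Lemma CnOn_plus (n : nat) (a : R) (f g : R -> R) :
  CnOn n a f -> CnOn n a g -> CnOn n a (fun t => f t + g t).
Proof.
  revert f g. induction n as [|n IH]; intros f g Hf Hg.
  - apply CnOn_0. intros t Ht. apply (continuous_plus f g);
      [apply (proj1 (CnOn_0 a f) Hf) | apply (proj1 (CnOn_0 a g) Hg)]; exact Ht.
  - apply CnOn_S in Hf as [Df Hf]. apply CnOn_S in Hg as [Dg Hg]. apply CnOn_S. split.
    + intros t Ht. now apply (ex_derive_plus f g); auto.
    + apply (CnOn_ext n a (fun t => Derive f t + Derive g t)); [|now apply IH].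
      intros t Ht. now rewrite (Derive_plus f g t (Df t Ht) (Dg t Ht)).
Qed.

Lemma CnOn_mult (n : nat) (a : R) (f g : R -> R) :
  CnOn n a f -> CnOn n a g -> CnOn n a (fun t => f t * g t).
Proof.
  revert f g. induction n as [|n IH]; intros f g Hf Hg.
  - apply CnOn_0. intros t Ht. apply (continuous_mult f g);
      [apply (proj1 (CnOn_0 a f) Hf) | apply (proj1 (CnOn_0 a g) Hg)]; exact Ht.
  - pose proof (CnOn_pred _ _ _ Hf) as Hf'. pose proof (CnOn_pred _ _ _ Hg) as Hg'.
    apply CnOn_S in Hf as [Df Hf]. apply CnOn_S in Hg as [Dg Hg]. apply CnOn_S. split.
    + intros t Ht. now apply ex_derive_mult; auto.
    + apply (CnOn_ext n a (fun t => Derive f t * g t + f t * Derive g t)).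
      * intros t Ht. now rewrite (Derive_mult f g t (Df t Ht) (Dg t Ht)).
      * apply CnOn_plus; now apply IH.
Qed.

Lemma eventually_continuous_of_germ_C0 (f : R -> R) :
  germ_Cn 0 f -> eventually_R (fun t => continuous f t).
Proof. intros [a Ha]. exists a. exact (proj1 (CnOn_0 a f) Ha). Qed.

Lemma eventually_ex_derive_of_germ_C1 (f : R -> R) :
  germ_Cn 1 f -> eventually_R (fun t => ex_derive f t).
Proof. intros [a Ha]. exists a. now apply (proj1 (CnOn_S 0 a f) Ha). Qed.

Lemma eventually_R_and (P Q : R -> Prop) :
  eventually_R P -> eventually_R Q -> eventually_R (fun t => P t /\ Q t).
Proof.
  intros [a Ha] [b Hb]. exists (Rmax a b). intros t Ht.
  pose proof (Rmax_l a b). pose proof (Rmax_r a b). split; [apply Ha | apply Hb]; lra.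
Qed.

Lemma CnOn_linear_system (A B y v : R -> R) (t0 : R) :
  solves_linear_system A B y v t0 ->
  forall n a, t0 <= a -> CnOn n a A -> CnOn n a B -> CnOn n a y /\ CnOn n a v.
Proof.
  intros Hsys n.
  assert (Hd : forall t, t0 < t -> ex_derive y t /\ ex_derive v t)
    by (intros t Ht; destruct (Hsys t Ht) as [Dy Dv]; split; eexists; eassumption).
  induction n as [|n IH]; intros a Ha HA HB.
  - split; apply CnOn_0; intros t Ht; apply (ex_derive_continuous (V := R_NormedModule));
      apply Hd; lra.
  - destruct (IH a Ha (CnOn_pred _ _ _ HA) (CnOn_pred _ _ _ HB)) as [Hy Hv].
    split; apply CnOn_S; (split; [intros t Ht; apply Hd; lra|]).
    + apply (CnOn_ext n a (fun t => A t * v t)); [|apply CnOn_mult; auto using CnOn_pred].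
      intros t Ht. symmetry. apply is_derive_unique. apply (proj1 (Hsys t ltac:(lra))).
    + apply (CnOn_ext n a (fun t => B t * y t)); [|apply CnOn_mult; auto using CnOn_pred].
      intros t Ht. symmetry. apply is_derive_unique. apply (proj2 (Hsys t ltac:(lra))).
Qed.

Lemma germ_Cinf_linear_system (A B y v : R -> R) (t0 : R) :
  solves_linear_system A B y v t0 ->
  germ_Cinf A -> germ_Cinf B -> germ_Cinf y.
Proof.
  intros Hsys HA HB n. destruct (HA n) as [aA HaA], (HB n) as [aB HaB].
  pose proof (Rmax_l t0 (Rmax aA aB)). pose proof (Rmax_r t0 (Rmax aA aB)).
  pose proof (Rmax_l aA aB). pose proof (Rmax_r aA aB).
  exists (Rmax t0 (Rmax aA aB)).
  apply (CnOn_linear_system A B y v t0 Hsys); [lra | |].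
  - apply (CnOn_tail n aA); [lra | exact HaA].
  - apply (CnOn_tail n aB); [lra | exact HaB].
Qed.

Lemma not_pinfty_of_le_derive_nonpos (psi dpsi F : R -> R) (b : R) :
  (forall t, b < t -> is_derive psi t (dpsi t)) -> (forall t, b < t -> dpsi t <= 0) ->
  (forall t, b < t -> F t <= psi t) -> ~ tends_to_pinfty F.
Proof.
  intros Hpsi Hneg Hle Hinf.
  destruct (Hinf (psi (b + 1))) as [c Hc].
  set (t := Rmax c (b + 1) + 1).
  assert (Hbt : b + 1 <= t) by (pose proof (Rmax_r c (b + 1)); unfold t; lra).
  assert (Hct : c < t) by (pose proof (Rmax_l c (b + 1)); unfold t; lra).
  assert (Hdecr : - psi (b + 1) <= - psi t).
  { apply (le_of_derive_nonneg (fun x => - psi x) (fun x => - dpsi x)); [lra | |].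
    - intros x Hx. apply (is_derive_opp psi). apply Hpsi. lra.
    - intros x Hx. pose proof (Hneg x ltac:(lra)). lra. }
  specialize (Hc t Hct). specialize (Hle t ltac:(lra)). lra.
Qed.

(* Leighton's argument: [w + G] decreases, so [w -> -oo]; then [F + 1 / u] with
   [u = 1 + (w + G)(a + 1) - (w + G)] also decreases, although it dominates [F -> +oo]. *)
Lemma riccati_not_pinfty (h g F G w : R -> R) (a : R) :
  (forall t, a < t -> is_derive w t (- g t - h t * w t ^ 2)) ->
  (forall t, a < t -> 0 <= h t) ->
  (forall t, a < t -> is_derive F t (h t)) ->
  (forall t, a < t -> is_derive G t (g t)) ->
  tends_to_pinfty G -> ~ tends_to_pinfty F.
Proof.
  intros Hw Hh HF HG HGinf.
  set (Phi := fun t => w t + G t).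
  assert (HPhi : forall t, a < t -> is_derive Phi t (- (h t * w t ^ 2))).
  { intros t Ht. replace (- (h t * w t ^ 2)) with ((- g t - h t * w t ^ 2) + g t) by ring.
    now apply (is_derive_plus w G); auto. }
  assert (HPhi_le : forall t, a + 1 <= t -> Phi t <= Phi (a + 1)).
  { intros t Ht. enough (- Phi (a + 1) <= - Phi t) by lra.
    apply (le_of_derive_nonneg (fun x => - Phi x) (fun x => h x * w x ^ 2)); [lra | |].
    - intros x Hx. rewrite <- (Ropp_involutive (h x * w x ^ 2)).
      apply (is_derive_opp Phi), HPhi. lra.
    - intros x Hx. pose proof (Hh x ltac:(lra)). pose proof (pow2_ge_0 (w x)). nra. }
  set (u := fun t => 1 + Phi (a + 1) - Phi t).
  destruct (HGinf (Phi (a + 1) + 1)) as [c Hc].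
  set (b := Rmax c (a + 1)).
  assert (Hb : forall t, b < t -> a + 1 < t /\ c < t)
    by (intros t Ht; pose proof (Rmax_l c (a + 1)); pose proof (Rmax_r c (a + 1));
        unfold b in Ht; lra).
  assert (Hu : forall t, b < t -> 1 <= u t /\ u t < - w t).
  { intros t Ht. destruct (Hb t Ht) as [Hat Hct].
    pose proof (HPhi_le t ltac:(lra)). pose proof (Hc t Hct). unfold u, Phi in *. lra. }
  apply (not_pinfty_of_le_derive_nonpos (fun t => F t + / u t)
           (fun t => h t - h t * w t ^ 2 / u t ^ 2) F b).
  - intros t Ht. destruct (Hb t Ht) as [Hat _]. destruct (Hu t Ht) as [Hu1 _].
    assert (Du : is_derive u t (h t * w t ^ 2)).
    { replace (h t * w t ^ 2) with (0 - - (h t * w t ^ 2)) by ring.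
      apply (is_derive_minus (fun _ => 1 + Phi (a + 1)) Phi);
        [apply (is_derive_const (V := R_NormedModule)) | apply HPhi; lra]. }
    replace (h t - h t * w t ^ 2 / u t ^ 2) with (h t + - (h t * w t ^ 2) / u t ^ 2)
      by (field; lra).
    apply (is_derive_plus F (fun s => / u s)); [apply HF; lra|].
    apply (is_derive_inv u); [exact Du | lra].
  - intros t Ht. destruct (Hb t Ht) as [Hat _]. destruct (Hu t Ht) as [Hu1 Huw].
    assert (Hratio : 1 <= w t ^ 2 / u t ^ 2).
    { apply (Rmult_le_reg_r (u t ^ 2)); [nra|].
      unfold Rdiv. rewrite Rmult_assoc, Rinv_l by nra. nra. }
    pose proof (Hh t ltac:(lra)). nra.
  - intros t Ht. destruct (Hu t Ht) as [Hu1 _].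
    pose proof (Rinv_0_lt_compat (u t) ltac:(lra)). lra.
Qed.

Lemma riccati_of_linear_system (h g y v : R -> R) (a : R) :
  solves_linear_system h (fun t => - g t) y v a -> (forall t, a < t -> y t <> 0) ->
  forall t, a < t -> is_derive (fun s => v s / y s) t (- g t - h t * (v t / y t) ^ 2).
Proof.
  intros Hsys Hy t Ht. destruct (Hsys t Ht) as [Dy Dv].
  replace (- g t - h t * (v t / y t) ^ 2)
    with ((- g t * y t * y t - v t * (h t * v t)) / y t ^ 2) by (field; apply Hy, Ht).
  exact (is_derive_div v y t _ _ Dv Dy (Hy t Ht)).
Qed.

Lemma leighton_zeros (h g F G y v : R -> R) (t0 : R) :
  solves_linear_system h (fun t => - g t) y v t0 ->
  (forall t, t0 < t -> 0 <= h t) ->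
  (forall t, t0 < t -> is_derive F t (h t)) ->
  (forall t, t0 < t -> is_derive G t (g t)) ->
  tends_to_pinfty F -> tends_to_pinfty G ->
  forall a, exists t, a < t /\ y t = 0.
Proof.
  intros Hsys Hh HF HG HFinf HGinf a. apply NNPP. intro Hnz.
  set (a1 := Rmax a t0).
  assert (Ha1 : forall t, a1 < t -> a < t /\ t0 < t)
    by (intros t Ht; pose proof (Rmax_l a t0); pose proof (Rmax_r a t0); unfold a1 in Ht; lra).
  assert (Hy : forall t, a1 < t -> y t <> 0)
    by (intros t Ht Hy0; apply Hnz; exists t; split; [apply Ha1 | ]; auto).
  apply (riccati_not_pinfty h g F G (fun s => v s / y s) a1); auto.
  - apply (riccati_of_linear_system h g y v a1); auto.
    intros t Ht. apply Hsys, Ha1, Ht.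
  - intros t Ht. apply Hh, Ha1, Ht.
  - intros t Ht. apply HF, Ha1, Ht.
  - intros t Ht. apply HG, Ha1, Ht.
Qed.

Lemma wronskian_const (A B y1 v1 y2 v2 : R -> R) (t0 : R) :
  (forall x, continuous y1 x /\ continuous v1 x) -> (forall x, continuous y2 x /\ continuous v2 x) ->
  solves_linear_system A B y1 v1 t0 -> solves_linear_system A B y2 v2 t0 ->
  forall t, t0 < t -> y1 t * v2 t - v1 t * y2 t = y1 t0 * v2 t0 - v1 t0 * y2 t0.
Proof.
  intros C1 C2 S1 S2 t Ht.
  destruct (MVT_gen (fun s => y1 s * v2 s - v1 s * y2 s) t0 t (fun _ => 0)) as [c [_ Hc]];
    rewrite ?Rmin_left, ?Rmax_right in * by lra.
  - intros x Hx. destruct (S1 x ltac:(lra)) as [Dy1 Dv1], (S2 x ltac:(lra)) as [Dy2 Dv2].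
    replace 0 with ((A x * v1 x * v2 x + y1 x * (B x * y2 x))
                    - (B x * y1 x * y2 x + v1 x * (A x * v2 x))) by ring.
    apply (is_derive_minus (fun s => y1 s * v2 s) (fun s => v1 s * y2 s));
      [apply (is_derive_mult y1 v2) | apply (is_derive_mult v1 y2)];
      auto; intros; apply Rmult_comm.
  - intros x _. destruct (C1 x) as [Cy1 Cv1], (C2 x) as [Cy2 Cv2].
    apply continuity_pt_filterlim.
    apply (continuous_minus (fun s => y1 s * v2 s) (fun s => v1 s * y2 s));
      [apply (continuous_mult y1 v2) | apply (continuous_mult v1 y2)]; assumption.
  - lra.
Qed.

Lemma not_eventually_zero_of_wronskian (A B y1 v1 y2 v2 : R -> R) (t0 : R) :
  solves_linear_system A B y1 v1 t0 -> (forall t, t0 < t -> A t <> 0) ->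
  (forall t, t0 < t -> y1 t * v2 t - v1 t * y2 t = 1) ->
  forall a, exists t, a < t /\ y1 t <> 0.
Proof.
  intros Hsys HA HW a. apply NNPP. intro Hzero.
  set (t := Rmax a t0 + 1).
  assert (Hzero' : forall s, Rmax a t0 < s -> y1 s = 0).
  { intros s Hs. apply NNPP. intro Hs'. apply Hzero. exists s.
    pose proof (Rmax_l a t0). split; [lra | exact Hs']. }
  assert (Ht : Rmax a t0 < t /\ t0 < t) by (pose proof (Rmax_r a t0); unfold t; lra).
  destruct (Hsys t (proj2 Ht)) as [Dy _].
  assert (Hv : A t * v1 t = 0).
  { rewrite <- (is_derive_unique _ _ _ Dy), (Derive_ext_loc _ (fun _ => 0)) by
      (apply (filter_imp (fun s => Rmax a t0 < s)); [exact Hzero' | apply locally_gt, Ht]).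
    apply Derive_const. }
  apply Rmult_integral in Hv as [Hv | Hv]; [now apply (HA t) |].
  pose proof (HW t (proj2 Ht)). rewrite Hv, (Hzero' t (proj1 Ht)) in *. lra.
Qed.

Section SelfAdjointEquation.

Variables (f h g F G : R -> R) (b : R).
Hypothesis Hfh : forall t, b < t -> f t * h t = 1.
Hypothesis Hdf : forall t, b < t -> ex_derive f t.
Hypothesis Hdh : forall t, b < t -> ex_derive h t.
Hypothesis Hcg : forall t, b < t -> continuous g t.
Hypothesis HF : forall t, b < t -> is_derive F t (/ f t).
Hypothesis HG : forall t, b < t -> is_derive G t (g t).
Hypothesis HFinf : tends_to_pinfty F.
Hypothesis HGinf : tends_to_pinfty G.

Lemma is_derive_F (t : R) : b < t -> is_derive F t (h t).
Proof.
  intro Ht. specialize (Hfh t Ht).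
  replace (h t) with (/ f t); [now apply HF|].
  assert (f t <> 0) by (intro Hf0; rewrite Hf0 in Hfh; lra). field_simplify_eq; auto.
Qed.

Lemma continuous_h (t : R) : b < t -> continuous h t.
Proof. intro Ht. apply (ex_derive_continuous (V := R_NormedModule)), Hdh, Ht. Qed.

(* [h] has no zero on [(b, +oo)], so it has constant sign there; a negative sign would
   make the primitive [F] decrease. *)
Lemma h_pos (t : R) : b < t -> 0 < h t.
Proof.
  assert (Hh0 : forall s, b < s -> h s <> 0)
    by (intros s Hs Hh; specialize (Hfh s Hs); rewrite Hh in Hfh; lra).
  intro Ht. destruct (Rlt_le_dec 0 (h t)) as [|Hle]; [easy | exfalso].
  assert (Hneg : forall s, t < s -> h s < 0).
  { intros s Hs. destruct (Rlt_le_dec (h s) 0) as [|Hge]; [easy | exfalso].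
    assert (Hht : h t < 0) by (destruct Hle as [|Heq]; [easy | now apply (Hh0 t) in Heq]).
    assert (Hhs : 0 < h s) by (destruct Hge as [|Heq]; [easy | exfalso; apply (Hh0 s); lra]).
    destruct (Ranalysis5.IVT_interv h t s) as [z [Hz Hz0]]; auto.
    - intros x Hx. apply continuity_pt_filterlim, continuous_h. lra.
    - apply (Hh0 z); [lra | exact Hz0]. }
  apply (not_pinfty_of_le_derive_nonpos F h F t); auto.
  - intros s Hs. apply is_derive_F. lra.
  - intros s Hs. left. now apply Hneg.
  - intros s _. apply Rle_refl.
Qed.

Lemma self_adjoint_eq_of_system (y v : R -> R) (t0 : R) :
  b <= t0 -> solves_linear_system h (fun t => - g t) y v t0 ->
  forall t, t0 < t -> f t * Derive_n y 2 t + Derive f t * Derive y t + g t * y t = 0.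
Proof.
  intros Hb Hsys t Ht. destruct (Hsys t Ht) as [Dy Dv].
  assert (Hbt : b < t) by lra.
  assert (Ey : Derive y t = h t * v t) by now apply is_derive_unique.
  assert (Ev : Derive v t = - g t * y t) by now apply is_derive_unique.
  assert (Ey2 : Derive_n y 2 t = Derive h t * v t + h t * Derive v t).
  { change (Derive (Derive y) t = Derive h t * v t + h t * Derive v t).
    rewrite (Derive_ext_loc (Derive y) (fun s => h s * v s)).
    - apply Derive_mult; [now apply Hdh | now exists (- g t * y t)].
    - apply (filter_imp (fun s => t0 < s)); [|now apply locally_gt].
      intros s Hs. apply is_derive_unique, Hsys, Hs. }
  assert (Efh : Derive f t * h t + f t * Derive h t = 0).
  { rewrite <- Derive_mult by auto.
    rewrite (Derive_ext_loc _ (fun _ => 1)); [apply Derive_const|].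
    apply (filter_imp (fun s => b < s)); [exact Hfh | now apply locally_gt]. }
  rewrite Ey2, Ey, Ev.
  transitivity (v t * (Derive f t * h t + f t * Derive h t) - g t * y t * (f t * h t - 1));
    [ring | rewrite Efh, (Hfh t Hbt); ring].
Qed.

Theorem self_adjoint_oscillating_solution :
  germ_Cinf h -> germ_Cinf (fun t => - g t) ->
  exists y : R -> R, germ_Cinf y /\
    eventually_R (fun t =>
      f t * Derive_n y 2 t + Derive f t * Derive y t + g t * y t = 0) /\
    oscillates y.
Proof.
  intros Ch Cg.
  set (t0 := b + 1).
  assert (Hcont_g : forall z, b < z -> continuous (fun t => - g t) z)
    by (intros z Hz; now apply (continuous_opp g), Hcg).
  destruct (linear_system_solution h _ b t0 1 0 ltac:(unfold t0; lra) continuous_h Hcont_g)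
    as (y1 & v1 & C1 & Y1 & V1 & S1).
  destruct (linear_system_solution h _ b t0 0 1 ltac:(unfold t0; lra) continuous_h Hcont_g)
    as (y2 & v2 & C2 & Y2 & V2 & S2).
  assert (Hpos : forall t, t0 < t -> 0 < h t) by (intros t Ht; apply h_pos; unfold t0 in Ht; lra).
  exists y1. split; [|split; [|split]].
  - exact (germ_Cinf_linear_system h _ y1 v1 t0 S1 Ch Cg).
  - exists t0. apply (self_adjoint_eq_of_system y1 v1 t0); [unfold t0; lra | exact S1].
  - apply (leighton_zeros h g F G y1 v1 t0); auto.
    + intros t Ht. now apply Rlt_le, Hpos.
    + intros t Ht. apply is_derive_F. unfold t0 in Ht; lra.
    + intros t Ht. apply HG. unfold t0 in Ht; lra.
  - apply (not_eventually_zero_of_wronskian h _ y1 v1 y2 v2 t0 S1).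
    + intros t Ht. now apply Rgt_not_eq, Hpos.
    + intros t Ht. rewrite (wronskian_const h _ y1 v1 y2 v2 t0 C1 C2 S1 S2 t Ht), Y1, V1, Y2, V2.
      ring.
Qed.

End SelfAdjointEquation.

Theorem mainTheorem15 (H : (R -> R) -> Prop) (f g : R -> R) :
  HardyField H ->
  H f -> ~ germ_eq f (fun _ => 0) ->
  H g ->
  (exists F : R -> R, germ_Cn 1 F /\
     eventually_R (fun t => is_derive F t (/ f t)) /\ tends_to_pinfty F) ->
  (exists G : R -> R, germ_Cn 1 G /\
     eventually_R (fun t => is_derive G t (g t)) /\ tends_to_pinfty G) ->
  exists y : R -> R, germ_Cinf y /\
    eventually_R (fun t =>
      f t * Derive_n y 2 t + Derive f t * Derive y t + g t * y t = 0) /\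
    oscillates y.
Proof.
  intros HH Hf Hf0 Hg [F [_ [HF HFinf]]] [G [_ [HG HGinf]]].
  destruct (hf_inv H HH f Hf Hf0) as [h [Hh Hfh]].
  pose proof (hf_Cinf H HH h Hh) as Ch.
  pose proof (hf_Cinf H HH _ (hf_opp H HH g Hg)) as Cg.
  destruct (eventually_R_and _ _ Hfh (eventually_R_and _ _ HF (eventually_R_and _ _ HG
    (eventually_R_and _ _ (eventually_ex_derive_of_germ_C1 f (hf_Cinf H HH f Hf 1%nat))
    (eventually_R_and _ _ (eventually_ex_derive_of_germ_C1 h (Ch 1%nat))
      (eventually_continuous_of_germ_C0 g (hf_Cinf H HH g Hg 0%nat)))))))
    as [b Hb].
  apply (self_adjoint_oscillating_solution f h g F G b); auto;
    intros t Ht; destruct (Hb t Ht) as (? & ? & ? & ? & ? & ?); assumption.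
Qed.
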